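(* As formal series of linear operators on $\mathcal N_q^-$ (with $x^-_i(v)=\sum_m x^-_{i,m}v^{-m}$ acting by left multiplication), for all $1\le i,j,k,m\le N$: $$\Omega_{\psi_m}(u)x^-_i(v)=\delta_{i,m}\delta(v\gamma/u)+g_{i,m,q^{-1}}(v\gamma/u)\,x^-_i(v)\Omega_{\psi_m}(u),$$ $$\Omega_{\phi_m}(u)x^-_i(v)=\delta_{i,m}\delta(u\gamma/v)+g_{i,m}(u\gamma/v)\,x^-_i(v)\Omega_{\phi_m}(u),$$ $$(q^{(\alpha_j|\alpha_k)}u_1-u_2)\Omega_{\psi_j}(u_1)\Omega_{\psi_k}(u_2)=(u_1-q^{(\alpha_j|\alpha_k)}u_2)\Omega_{\psi_k}(u_2)\Omega_{\psi_j}(u_1),$$ $$(q^{(\alpha_j|\alpha_k)}u_1-u_2)\Omega_{\phi_j}(u_1)\Omega_{\phi_k}(u_2)=(u_1-q^{(\alpha_j|\alpha_k)}u_2)\Omega_{\phi_k}(u_2)\Omega_{\phi_j}(u_1),$$ $$(q^{(\alpha_j|\alpha_k)}\gamma^2u_1-u_2)\Omega_{\phi_j}(u_1)\Omega_{\psi_k}(u_2)=(\gamma^2u_1-q^{(\alpha_j|\alpha_k)}u_2)\Omega_{\psi_k}(u_2)\Omega_{\phi_j}(u_1).$$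
   Context: Let $\mathfrak g$ be a finite-dimensional complex simple Lie algebra of rank $N$ with simple roots $\alpha_1,\dots,\alpha_N$ and invariant form $(\cdot|\cdot)$; $U_q(\widehat{\mathfrak g})$ the untwisted quantum affine algebra over $\mathbb C(q^{1/2})$ in Drinfeld's realization with generators $x^\pm_{i,r}$, $h_{i,s}$, $K_i^{\pm1}$, $\gamma^{\pm1/2}$ (central), $D^{\pm1}$; the $x^-$ satisfy $x^-_{i,k+1}x^-_{j,l}-q^{-(\alpha_i|\alpha_j)}x^-_{j,l}x^-_{i,k+1}=q^{-(\alpha_i|\alpha_j)}x^-_{i,k}x^-_{j,l+1}-x^-_{j,l+1}x^-_{i,k}$. Let $\mathcal N_q^-$ be the subalgebra generated by $\gamma^{\pm1/2}$ and all $x^-_{i,l}$. Let $\delta(z)=\sum_{k\in\mathbb Z}z^k$; let $g_{ij}(t)$ be the Taylor series at $t=0$ of $(q^{(\alpha_i|\alpha_j)}t-1)/(t-q^{(\alpha_i|\alpha_j)})$ and $g_{ij,q^{-1}}(t)$ the same with $q$ replaced by $q^{-1}$. Put $x^-_i(v)=\sum_{m}x^-_{i,m}v^{-m}$. Operators $\Omega_{\psi_i}(l),\Omega_{\phi_i}(l):\mathcal N_q^-\to\mathcal N_q^-$ ($l\in\mathbb Z$, $1\le i\le N$), with generating series $\Omega_{\psi_i}(u)=\sum_l\Omega_{\psi_i}(l)u^{-l}$, $\Omega_{\phi_i}(u)=\sum_l\Omega_{\phi_i}(l)u^{-l}$, are defined as follows: they commute with multiplication by $\gamma^{\pm1/2}$,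 kill $1$, and for $\bar P=x^-_{j_1}(v_1)\cdots x^-_{j_k}(v_k)$ (a generating series whose coefficients are the monomials $x^-_{j_1,n_1}\cdots x^-_{j_k,n_k}$), with $\bar P_l$ the product with the $l$-th factor omitted, $\Omega_{\psi_i}(u)(\bar P)=\sum_{l=1}^k\delta_{i,j_l}\prod_{m=1}^{l-1}g_{i,j_m,q^{-1}}(v_m/v_l)\,\bar P_l\,\delta(u/v_l\gamma)$ and $\Omega_{\phi_i}(u)(\bar P)=\sum_{l=1}^k\delta_{i,j_l}\prod_{m=1}^{l-1}g_{i,j_m}(v_l/v_m)\,\bar P_l\,\delta(u\gamma/v_l)$. *)

From HB Require Import structures.
From mathcomp Require Import all_boot all_order all_algebra.
From mathcomp Require Import complex fraction Rstruct.

Set Implicit Arguments.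
Unset Strict Implicit.
Unset Printing Implicit Defensive.

Import Order.TTheory GRing.Theory Num.Theory.
Local Open Scope ring_scope.

(* The base field C(q^{1/2}): rational functions in one indeterminate        *)
(* q^{1/2} = 'X over the complex numbers C = R[i] (R = the real numbers).    *)
Notation Kq := {fraction {poly complex Rdefinitions.R}}.

Definition qhalf : Kq := tofrac ('X : {poly complex Rdefinitions.R}).
Definition qq : Kq := qhalf ^+ 2.

(* Root data: B i j = (alpha_i | alpha_j) for the simple roots alpha_1..alpha_N
   (indices 0..N-1 here) of a finite-dimensional complex simple Lie algebra,
   w.r.t. an invariant form normalised to take integer values.  This is the
   symmetrised Cartan matrix of an indecomposable Cartan matrix of finite type:
   symmetric, positive diagonal, Cartan integers a_ij = 2 B_ij / B_ii are
   nonpositive integers off the diagonal, positive definite, indecomposable. *)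
Definition fin_simple_form (N : nat) (B : 'I_N -> 'I_N -> int) : Prop :=
  [/\ (0 < N)%N,
      (forall i j, B i j = B j i),
      (forall i, 0 < B i i),
      (forall i j, i != j -> B i j <= 0 /\ (B i i %| 2 * B i j)%Z) &
      (forall x : 'I_N -> rat, (exists i, x i != 0) ->
          0 < \sum_i \sum_j x i * (B i j)%:~R * x j)
   /\ (forall S : {set 'I_N}, S != set0 -> S != setT ->
          exists i j, [/\ i \in S, j \notin S & B i j != 0])].

(* Taylor coefficients at t = 0 of  g_Q(t) = (Q t - 1) / (t - Q):
     g_Q(t) = sum_n gcoef Q n t^n,  gcoef Q 0 = Q^-1,
     gcoef Q n = Q^-(n+1) - Q^-(n-1)  for n >= 1.
   g_{ij}         = g_{q^{(alpha_i|alpha_j)}},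
   g_{ij,q^{-1}}  = g_{(q^{-1})^{(alpha_i|alpha_j)}}.                        *)
Definition gcoef (F : fieldType) (Q : F) (n : nat) : F :=
  if n is n'.+1 then Q ^- n'.+2 - Q ^- n' else Q^-1.


(* sanity check: (t - Q) * sum_n gcoef Q n t^n = Q t - 1 coefficientwise *)
Lemma gcoef_spec (F : fieldType) (Q : F) : Q != 0 ->
  [/\ - Q * gcoef Q 0 = -1,
      gcoef Q 0 - Q * gcoef Q 1 = Q &
      forall n, (1 < n)%N -> gcoef Q n.-1 - Q * gcoef Q n = 0].
Proof.
move=> Q0.
have hk k : Q * Q ^- k.+1 = Q ^- k by rewrite exprS invfM mulVKf.
rewrite /gcoef; split.
- by rewrite /= mulNr divff.
- by rewrite /= mulrBr hk expr0 invr1 mulr1 opprB addrC subrK.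
- case=> [|[|n]] //= _.
  by rewrite mulrBr !hk subrr.
Qed.

Definition g_ij N (B : 'I_N -> 'I_N -> int) (i j : 'I_N) : nat -> Kq :=
  gcoef (qq ^ B i j).
Definition g_ij_qinv N (B : 'I_N -> 'I_N -> int) (i j : 'I_N) : nat -> Kq :=
  gcoef (qq^-1 ^ B i j).

(* Integer powers of gamma^{1/2}, given gh = gamma^{1/2} and ghi = gamma^{-1/2}:
   gpow gh ghi z = gamma^{z/2}.  In particular gamma^l = gpow gh ghi (2 * l). *)
Definition gpow (A : ringType) (gh ghi : A) (z : int) : A :=
  match z with Posz n => gh ^+ n | Negz n => ghi ^+ n.+1 end.

Definition mono (A : ringType) N (x : 'I_N -> int -> A)
  (s : seq ('I_N * int)) : A := \prod_(e <- s) x e.1 e.2.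

(* Coefficient of u^{-l} v_1^{-n_1} ... v_k^{-n_k} in
     Omega_psi_i(u)(x_{j_1}(v_1)...x_{j_k}(v_k))
   = sum_t delta_{i,j_t} prod_{m<t} g_{i,j_m,q^{-1}}(v_m/v_t) Pbar_t delta(u/(v_t gamma)),
   i.e. the value of Omega_psi_i(l) on the monomial x_{j_1,n_1}...x_{j_k,n_k}:
     sum over positions t with j_t = i, and over (p_m)_{m<t} in N^t with
     sum_m p_m = l + n_t, of
       prod_{m<t} g_{i,j_m,q^{-1}}[p_m] * gamma^l *
       x_{j_1,n_1+p_1} ... x_{j_{t-1},n_{t-1}+p_{t-1}} x_{j_{t+1},n_{t+1}} ... *)
Definition psi_mono (A : algType Kq) N (B : 'I_N -> 'I_N -> int)
  (gh ghi : A) (x : 'I_N -> int -> A) (i : 'I_N) (l : int)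
  (s : seq ('I_N * int)) : A :=
  let d := (i, 0%Z) in
  \sum_(t < size s | (nth d s t).1 == i)
    (if 0 <= l + (nth d s t).2 then
       \sum_(p : {ffun 'I_t -> 'I_(absz (l + (nth d s t).2)%R).+1}
               | (\sum_m (p m : nat) == absz (l + (nth d s t).2)%R)%N)
          (\prod_(m < t) g_ij_qinv B i (nth d s m).1 (p m)) *:
          (gpow gh ghi (2 * l) *
           mono x ([seq ((nth d s m).1, (nth d s m).2 + (p m : nat)%:Z)
                   | m : 'I_t <- enum 'I_t] ++ drop t.+1 s))
     else 0).

(* Same for Omega_phi_i(u)(x_{j_1}(v_1)...x_{j_k}(v_k))
   = sum_t delta_{i,j_t} prod_{m<t} g_{i,j_m}(v_t/v_m) Pbar_t delta(u gamma/v_t):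
     sum over t with j_t = i, and over (p_m)_{m<t} with sum_m p_m = -(l + n_t), of
       prod_{m<t} g_{i,j_m}[p_m] * gamma^{-l} *
       x_{j_1,n_1-p_1} ... x_{j_{t-1},n_{t-1}-p_{t-1}} x_{j_{t+1},n_{t+1}} ...   *)
Definition phi_mono (A : algType Kq) N (B : 'I_N -> 'I_N -> int)
  (gh ghi : A) (x : 'I_N -> int -> A) (i : 'I_N) (l : int)
  (s : seq ('I_N * int)) : A :=
  let d := (i, 0%Z) in
  \sum_(t < size s | (nth d s t).1 == i)
    (if l + (nth d s t).2 <= 0 then
       \sum_(p : {ffun 'I_t -> 'I_(absz (l + (nth d s t).2)%R).+1}
               | (\sum_m (p m : nat) == absz (l + (nth d s t).2)%R)%N)
          (\prod_(m < t) g_ij B i (nth d s m).1 (p m)) *: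
          (gpow gh ghi (- (2 * l)) *
           mono x ([seq ((nth d s m).1, (nth d s m).2 - (p m : nat)%:Z)
                   | m : 'I_t <- enum 'I_t] ++ drop t.+1 s))
     else 0).

(* N_q^-: a C(q^{1/2})-algebra A containing gamma^{1/2} (gh, invertible with
   inverse ghi, central) and the x^-_{i,l}, generated (as a vector space, by
   monomials gamma^{z/2} x_{j_1,n_1}...x_{j_k,n_k}) by these elements, in which
   the quadratic x^- relation of U_q(\hat g) holds.                          *)
Definition Nq_minus N (B : 'I_N -> 'I_N -> int) (A : algType Kq)
  (gh ghi : A) (x : 'I_N -> int -> A) : Prop :=
  [/\ gh * ghi = 1, ghi * gh = 1,
      (forall a : A, gh * a = a * gh),
      (forall (i j : 'I_N) (k l : int),
         x i (k + 1) * x j l - qq ^ (- B i j) *: (x j l * x i (k + 1))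
         = qq ^ (- B i j) *: (x i k * x j (l + 1)) - x j (l + 1) * x i k) &
      (forall a : A, exists r : seq (Kq * int * seq ('I_N * int)),
         a = \sum_(e <- r) e.1.1 *: (gpow gh ghi e.1.2 * mono x e.2))].

Definition Omega_spec (A : algType Kq) N
  (F : 'I_N -> int -> seq ('I_N * int) -> A)
  (gh ghi : A) (x : 'I_N -> int -> A) (O : 'I_N -> int -> A -> A) : Prop :=
  [/\ (forall i l (c : Kq) (a b : A), O i l (c *: a + b) = c *: O i l a + O i l b),
      (forall i l (a : A), O i l (gh * a) = gh * O i l a),
      (forall i l (a : A), O i l (ghi * a) = ghi * O i l a),
      (forall i l, O i l 1 = 0) &
      (forall i l s, O i l (mono x s) = F i l s)].

(* Locally finite sums: "sum_{r >= 0} f r = s" where only finitely many f r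
   are nonzero.  Used for coefficients of products of formal series of
   operators, evaluated at a given element of N_q^-.                         *)
Definition fin_sum_to (V : nmodType) (f : nat -> V) (s : V) : Prop :=
  exists M : nat, (forall r, (M <= r)%N -> f r = 0) /\ s = \sum_(r < M) f r.

From HB Require Import structures.
From mathcomp Require Import all_boot all_order all_algebra.
From mathcomp Require Import complex fraction Rstruct.
From mathcomp Require Import zify.

Set Implicit Arguments.
Unset Strict Implicit.
Unset Printing Implicit Defensive.
Import Order.TTheory GRing.Theory Num.Theory.
Local Open Scope ring_scope.

(* Both operators act on a monomial [x_{j_1,n_1} ... x_{j_k,n_k}] by deleting one
   factor [x_{i,*}] and multiplying the factors before it by Taylor coefficients
   of [g].  Peeling off the first factor of the monomial yields, on monomials and
   then by linearity on all of N_q^-, the exchange relation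
     [Omega_m(u) x_i(v) = delta + g(..) x_i(v) Omega_m(u)],
   where all sums are finite because only finitely many modes of [Omega_m] act
   nontrivially on a given element.  The quadratic relations follow by induction
   on the length of a monomial: moving its first factor through both operators
   with the exchange relation produces delta terms, which cancel thanks to the
   linear recurrences satisfied by the Taylor coefficients of the Moebius
   function [g], plus the same relation at shifted modes applied to a shorter
   monomial.  Omega_psi and Omega_phi are treated uniformly, a boolean flag
   recording their sign conventions. *)

Section GammaPowers.
Variables (A : algType Kq) (gh ghi : A).
Hypotheses (gh_ghi : gh * ghi = 1) (ghi_gh : ghi * gh = 1).
Hypothesis gh_central : forall a : A, gh * a = a * gh.

Lemma ghi_central (a : A) : ghi * a = a * ghi.
Proof.
by rewrite -[ghi * a]mulr1 -gh_ghi mulrA -[ghi * a * gh]mulrA -gh_central !mulrA ghi_gh mul1r.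
Qed.

Lemma gpow_central z (a : A) : gpow gh ghi z * a = a * gpow gh ghi z.
Proof.
case: z => n /=.
  elim: n => [|n IH]; first by rewrite expr0 mul1r mulr1.
  by rewrite exprS -mulrA IH mulrA gh_central mulrA.
elim: n.+1 => [|k IH]; first by rewrite expr0 mul1r mulr1.
by rewrite exprS -mulrA IH mulrA ghi_central mulrA.
Qed.

Lemma gpow0 : gpow gh ghi 0 = 1.
Proof. by rewrite /= expr0. Qed.

Lemma gpowD1 z : gpow gh ghi (z + 1) = gh * gpow gh ghi z.
Proof.
case: z => [n|[|n]].
- have -> : n%:Z + 1 = n.+1 by lia.
  by rewrite /= exprS.
- by rewrite /= expr1 gh_ghi.
- have -> : Negz n.+1 + 1 = Negz n by rewrite !NegzE; lia.
  by rewrite /= [ghi ^+ n.+2]exprS mulrA gh_ghi mul1r.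
Qed.

Lemma gpowB1 z : gpow gh ghi (z - 1) = ghi * gpow gh ghi z.
Proof.
case: z => [[|n]|n].
- by rewrite /= expr1 mulr1.
- have -> : n.+1%:Z - 1 = n by lia.
  by rewrite /= exprS mulrA ghi_gh mul1r.
- have -> : Negz n - 1 = Negz n.+1 by rewrite !NegzE; lia.
  by rewrite /= [ghi ^+ n.+2]exprS.
Qed.

Lemma gpowD z1 z2 : gpow gh ghi (z1 + z2) = gpow gh ghi z1 * gpow gh ghi z2.
Proof.
case: z2 => n; last rewrite NegzE.
  elim: n => [|n IH]; first by rewrite addr0 gpow0 mulr1.
  rewrite -addn1 PoszD addrA !gpowD1 IH.
  by rewrite mulrA gh_central mulrA.
elim: n => [|n IH].
  by rewrite -[- 1%:Z]add0r addrA addr0 !gpowB1 gpow0 mulr1 ghi_central.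
have -> : z1 - n.+2%:Z = (z1 - n.+1%:Z) - 1 by lia.
have -> : - n.+2%:Z = (- n.+1%:Z) - 1 by lia.
by rewrite !gpowB1 IH mulrA ghi_central mulrA.
Qed.

End GammaPowers.

Fixpoint compositions (t L : nat) : seq (seq nat) :=
  match t with
  | 0 => if L == 0%N then [:: [::]] else [::]
  | t'.+1 => [seq r :: c | r <- iota 0 L.+1, c <- compositions t' (L - r)]
  end.

Lemma big_compositionsS (V : nmodType) t L (F : seq nat -> V) :
  \sum_(c <- compositions t.+1 L) F c
  = \sum_(r <- iota 0 L.+1) \sum_(c <- compositions t (L - r)) F (r :: c).
Proof. exact: big_allpairs_dep. Qed.

Definition ffun_cons t M (a : 'I_M.+1) (q : {ffun 'I_t -> 'I_M.+1}) :
    {ffun 'I_t.+1 -> 'I_M.+1} :=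
  [ffun m => if unlift ord0 m is Some m' then q m' else a].

Definition ffun_uncons t M (p : {ffun 'I_t.+1 -> 'I_M.+1}) :
    'I_M.+1 * {ffun 'I_t -> 'I_M.+1} :=
  (p ord0, [ffun m => p (lift ord0 m)]).

Lemma ffun_cons_bij t M :
  bijective (fun aq : 'I_M.+1 * {ffun 'I_t -> 'I_M.+1} => ffun_cons aq.1 aq.2).
Proof.
exists (@ffun_uncons t M).
  case=> a q; rewrite /ffun_uncons /ffun_cons /=; congr (_, _).
    by rewrite ffunE unlift_none.
  by apply/ffunP=> m; rewrite !ffunE liftK.
move=> p; rewrite /ffun_uncons /ffun_cons /=; apply/ffunP=> m; rewrite !ffunE.
by case: unliftP => [m'|] ->; rewrite ?ffunE.
Qed.

Lemma sum_ffun_compositions (V : nmodType) t : forall L M (Q : seq nat -> V),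
  (L <= M)%N ->
  \sum_(p : {ffun 'I_t -> 'I_M.+1} | (\sum_m (p m : nat) == L)%N)
     Q [seq (p m : nat) | m <- enum 'I_t]
  = \sum_(c <- compositions t L) Q c.
Proof.
elim: t => [|t IH] L M Q LM.
  rewrite /= enum_ord0 /=.
  under eq_bigl => p do rewrite big_ord0.
  case: L LM => [|L] LM /=; last by rewrite big_nil big_pred0.
  rewrite big_cons big_nil addr0 sumr_const card_ffun card_ord.
  by rewrite (card_ord 0) expn0 mulr1n.
rewrite big_compositionsS.
rewrite (reindex _ (onW_bij _ (@ffun_cons_bij t M))) /=.
rewrite -(pair_big_dep xpredT (fun a (q : {ffun 'I_t -> 'I_M.+1}) =>
   (\sum_m (ffun_cons a q m : nat) == L)%N)
   (fun a q => Q [seq (ffun_cons a q m : nat) | m <- enum 'I_t.+1])) /=.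
have sum_cons a q :
    (\sum_m (ffun_cons a q m : nat) = a + \sum_m (q m : nat))%N.
  rewrite big_ord_recl /ffun_cons ffunE unlift_none; congr (_ + _)%N.
  by apply: eq_bigr => m _; rewrite ffunE liftK.
have map_cons a q : [seq (ffun_cons a q m : nat) | m <- enum 'I_t.+1]
              = (a : nat) :: [seq (q m : nat) | m <- enum 'I_t].
  rewrite enum_ordSl /= /ffun_cons ffunE unlift_none -map_comp; congr (_ :: _).
  by apply: eq_map => m /=; rewrite ffunE liftK.
under eq_bigr => a _ do under eq_bigl => q do rewrite sum_cons.
under eq_bigr => a _ do under eq_bigr => q _ do rewrite map_cons.
transitivity (\sum_(a < M.+1) (if (a <= L)%N then
    \sum_(c <- compositions t (L - a)) Q ((a : nat) :: c) else 0)).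
  apply: eq_bigr => a _; case: leqP => aL; last first.
    by rewrite big_pred0 // => q; apply/eqP; lia.
  rewrite -(IH (L - a)%N M (fun c => Q ((a : nat) :: c))); last by lia.
  by apply: eq_bigl => q; apply/eqP/eqP; lia.
rewrite -(big_mkord xpredT (fun a => if (a <= L)%N then
    \sum_(c <- compositions t (L - a)) Q ((a : nat) :: c) else 0)).
rewrite (big_cat_nat (n := L.+1)) //.
rewrite [X in _ _ X = _]big1_seq; last first.
  by move=> i /andP[_]; rewrite mem_index_iota; case: leqP => //; lia.
rewrite Monoid.mulm1 /index_iota subn0; apply: eq_big_seq => r.
by rewrite mem_iota add0n ltnS => /andP[_ ->].
Qed.

(* The flag [b] selects Omega_phi ([true]) or Omega_psi ([false]); the two
   operators differ only by the signs below. *)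
Definition oriented (b : bool) (z : int) : bool := if b then z <= 0 else 0 <= z.
Definition gamma_exp (b : bool) (l : int) : int := if b then - (2 * l) else 2 * l.
Definition xshift (b : bool) (n : int) (r : nat) : int := if b then n - r%:Z else n + r%:Z.
Definition lshift (b : bool) (l : int) (r : nat) : int := if b then l + r%:Z else l - r%:Z.

Section OmegaOnMonomials.
Variables (A : algType Kq) (N : nat) (G : 'I_N -> 'I_N -> nat -> Kq) (b : bool)
  (gh ghi : A) (x : 'I_N -> int -> A).

Definition omega_on_mono (i : 'I_N) (l : int) (s : seq ('I_N * int)) : A :=
  let d := (i, 0%Z) in
  \sum_(t < size s | (nth d s t).1 == i)
    (if oriented b (l + (nth d s t).2) then
       \sum_(p : {ffun 'I_t -> 'I_(absz (l + (nth d s t).2)%R).+1}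
               | (\sum_m (p m : nat) == absz (l + (nth d s t).2)%R)%N)
          (\prod_(m < t) G i (nth d s m).1 (p m)) *:
          (gpow gh ghi (gamma_exp b l) *
           mono x ([seq ((nth d s m).1, xshift b (nth d s m).2 (p m : nat))
                   | m : 'I_t <- enum 'I_t] ++ drop t.+1 s))
     else 0).

Definition omega_term (i : 'I_N) (l : int) (s : seq ('I_N * int)) (t : nat)
    (c : seq nat) : A :=
  (\prod_(m < t) G i (nth (i, 0%Z) s m).1 (nth 0%N c m)) *:
  (gpow gh ghi (gamma_exp b l) *
   mono x ([seq ((nth (i, 0%Z) s k).1, xshift b (nth (i, 0%Z) s k).2 (nth 0%N c k))
           | k <- iota 0 t] ++ drop t.+1 s)).

Definition omega_at (i : 'I_N) (l : int) (s : seq ('I_N * int)) (t : nat) : A :=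
  let e := nth (i, 0%Z) s t in
  if (e.1 == i) && oriented b (l + e.2) then
    \sum_(c <- compositions t (absz (l + e.2)%R)) omega_term i l s t c
  else 0.

Lemma omega_on_mono_compositions i l s :
  omega_on_mono i l s = \sum_(t < size s) omega_at i l s t.
Proof.
rewrite /omega_on_mono big_mkcond /=; apply: eq_bigr => t _.
rewrite /omega_at; case: ifP => //= _; case: ifP => // _.
rewrite -(@sum_ffun_compositions _ t _ _ (omega_term i l s t) (leqnn _)).
apply: eq_bigr => p _.
have nth_p (m : 'I_t) : nth 0%N [seq (p m0 : nat) | m0 <- enum 'I_t] m = p m.
  by rewrite (nth_map m) ?size_enum_ord ?ltn_ord // nth_ord_enum.
rewrite /omega_term; congr (_ *: (_ * mono x (_ ++ _))).
  by apply: eq_bigr => m _; rewrite nth_p.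
by rewrite -val_enum_ord -map_comp; apply: eq_map => m /=; rewrite nth_p.
Qed.

End OmegaOnMonomials.

Lemma psi_mono_omega (A : algType Kq) N (B : 'I_N -> 'I_N -> int) gh ghi
    (x : 'I_N -> int -> A) :
  psi_mono B gh ghi x = omega_on_mono (g_ij_qinv B) false gh ghi x.
Proof. by []. Qed.

Lemma phi_mono_omega (A : algType Kq) N (B : 'I_N -> 'I_N -> int) gh ghi
    (x : 'I_N -> int -> A) :
  phi_mono B gh ghi x = omega_on_mono (g_ij B) true gh ghi x.
Proof. by []. Qed.

Section ExchangeOnMonomials.
Variables (A : algType Kq) (N : nat) (G : 'I_N -> 'I_N -> nat -> Kq) (b : bool)
  (gh ghi : A) (x : 'I_N -> int -> A).
Hypotheses (gh_ghi : gh * ghi = 1) (ghi_gh : ghi * gh = 1).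
Hypothesis gh_central : forall a : A, gh * a = a * gh.
Hypothesis G_sym : forall i j r, G i j r = G j i r.

Let gpowC := gpow_central gh_ghi ghi_gh gh_central.
Let gpowD := gpowD gh_ghi ghi_gh gh_central.

Lemma gamma_exp_lshift l r : gamma_exp b l = 2 * r%:Z + gamma_exp b (lshift b l r).
Proof. by rewrite /gamma_exp /lshift; case: b; lia. Qed.

Lemma omega_term_cons m i n l s t r c :
  omega_term G b gh ghi x m l ((i, n) :: s) t.+1 (r :: c) =
  G i m r *: (gpow gh ghi (2 * r%:Z) *
    (x i (xshift b n r) * omega_term G b gh ghi x m (lshift b l r) s t c)).
Proof.
rewrite /omega_term (gamma_exp_lshift l r) gpowD G_sym big_ord_recl /=.
have -> : iota 1 t = [seq k.+1 | k <- iota 0 t] by rewrite -(iotaDl 1 0).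
rewrite -map_comp /= /mono big_cons /= -scalerA -!scalerAr.
congr (_ *: (_ *: _)); rewrite -!mulrA; congr (_ * _).
by rewrite mulrA gpowC -mulrA.
Qed.

Lemma oriented_lshift l z r : oriented b (l + z) ->
  if (r <= absz (l + z)%R)%N then
    oriented b (lshift b l r + z) /\ absz (lshift b l r + z)%R = (absz (l + z)%R - r)%N
  else ~~ oriented b (lshift b l r + z).
Proof. by rewrite /oriented /lshift; case: b; case: leqP; lia. Qed.

Lemma not_oriented_lshift l z r :
  ~~ oriented b (l + z) -> ~~ oriented b (lshift b l r + z).
Proof. by rewrite /oriented /lshift; case: b; lia. Qed.

Lemma omega_at_head m i n l s :
  omega_at G b gh ghi x m l ((i, n) :: s) 0
  = if (i == m) && (n == - l) then gpow gh ghi (gamma_exp b l) * mono x s else 0.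
Proof.
rewrite /omega_at /=; case: (i == m) => //=.
case: (eqVneq n (- l)) => [->|nl].
  rewrite subrr /oriented; case: b => /=;
  by rewrite big_cons big_nil addr0 /omega_term big_ord0 scale1r /= drop0.
case: ifP => // orient; rewrite /compositions.
case: eqP => [absz0|]; last by rewrite big_nil.
exfalso.
by move: orient nl absz0; rewrite /oriented; case: b; lia.
Qed.

(* The term deleting factor [t+1] of [x_{i,n} s]: the Taylor coefficient attached
   to the first factor [x_{i,n}] becomes the [g]-series of the exchange relation. *)
Lemma omega_at_cons m i n l s (t : nat) K :
  (absz (l + (nth (m, 0%Z) s t).2)%R < K)%N ->
  omega_at G b gh ghi x m l ((i, n) :: s) t.+1
  = \sum_(r < K) G i m r *: (gpow gh ghi (2 * r%:Z) *
       (x i (xshift b n r) * omega_at G b gh ghi x m (lshift b l r) s t)).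
Proof.
rewrite /omega_at; change (nth (m, 0%Z) ((i, n) :: s) t.+1) with (nth (m, 0%Z) s t).
set z := (nth (m, 0%Z) s t).2 => Kz.
case: ((nth (m, 0%Z) s t).1 == m); rewrite ?andTb ?andFb; last first.
  by rewrite big1 // => r _; rewrite !mulr0 scaler0.
case: (boolP (oriented b (l + z))) => [orient|not_orient]; last first.
  rewrite big1 // => r _.
  by rewrite (negbTE (not_oriented_lshift _ not_orient)) !mulr0 scaler0.
set L := absz (l + z)%R in Kz *.
rewrite big_compositionsS -(big_mkord xpredT (fun r => G i m r *:
  (gpow gh ghi (2 * r%:Z) * (x i (xshift b n r) *
   (if oriented b (lshift b l r + z) then
      \sum_(c <- compositions t (absz (lshift b l r + z)%R))
        omega_term G b gh ghi x m (lshift b l r) s t c else 0))))).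
rewrite [RHS](big_cat_nat (n := L.+1)) // [X in _ = _ + X]big1_seq; last first.
  move=> r /andP[_]; rewrite mem_index_iota => /andP[Lr _].
  have := oriented_lshift r orient; rewrite leqNgt Lr /= => /negbTE ->.
  by rewrite !mulr0 scaler0.
rewrite addr0 /index_iota subn0; apply: eq_big_seq => r.
rewrite mem_iota add0n ltnS => /andP[_ rL].
have := oriented_lshift r orient; rewrite rL => -[-> ->].
rewrite !mulr_sumr scaler_sumr; apply: eq_bigr => c _.
by rewrite omega_term_cons.
Qed.

(* The exchange relation [Omega_m(u) x_i(v) = delta + g(..) x_i(v) Omega_m(u)]
   on a monomial, the [g]-series being truncated at any large enough order [K]. *)
Lemma omega_on_mono_cons m i n l s K :
  (forall t : 'I_(size s), absz (l + (nth (m, 0%Z) s t).2)%R < K)%N ->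
  omega_on_mono G b gh ghi x m l ((i, n) :: s)
    - (if (i == m) && (n == - l) then gpow gh ghi (gamma_exp b l) * mono x s else 0)
  = \sum_(r < K) G i m r *: (gpow gh ghi (2 * r%:Z) *
       (x i (xshift b n r) * omega_on_mono G b gh ghi x m (lshift b l r) s)).
Proof.
move=> HK; rewrite omega_on_mono_compositions big_ord_recl omega_at_head addrC addKr.
under [RHS]eq_bigr => r _ do
  rewrite omega_on_mono_compositions mulr_sumr mulr_sumr scaler_sumr.
rewrite exchange_big; apply: eq_bigr => t _.
exact: omega_at_cons.
Qed.

End ExchangeOnMonomials.

Definition eventually (P : nat -> Prop) := exists K0, forall K, (K0 <= K)%N -> P K.

Lemma eventuallyI P Q :
  eventually P -> eventually Q -> eventually (fun K => P K /\ Q K).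
Proof.
move=> [K1 H1] [K2 H2]; exists (maxn K1 K2) => K; rewrite geq_max => /andP[K1K K2K].
by split; [apply: H1 | apply: H2].
Qed.

Lemma eventually_ge R : eventually (fun K => (R <= K)%N).
Proof. by exists R. Qed.

Lemma eventually_all_lt (P : nat -> nat -> Prop) R :
  (forall r, (r < R)%N -> eventually (P r)) ->
  eventually (fun K => forall r, (r < R)%N -> P r K).
Proof.
elim: R => [|R IH] HP; first by exists 0%N.
have [K1 H1] := IH (fun r Hr => HP r (ltnW Hr)).
have [K2 H2] := HP R (ltnSn R).
exists (maxn K1 K2) => K; rewrite geq_max => /andP[K1K K2K] r.
by rewrite ltnS leq_eqVlt => /orP[/eqP ->|Hr]; [apply: H2 | apply: H1].
Qed.

Lemma eventually_impl (P Q : nat -> Prop) :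
  (forall K, P K -> Q K) -> eventually P -> eventually Q.
Proof. by move=> PQ [K0 HK]; exists K0 => K /HK /PQ. Qed.

Lemma fin_sum_to_eventually (V : zmodType) (f : nat -> V) (s d : V) :
  eventually (fun K => s = d + \sum_(r < K) f r) -> fin_sum_to f (s - d).
Proof.
move=> [K0 HK]; exists K0; split; last by rewrite (HK K0 (leqnn K0)) addrC addKr.
move=> r Kr; have := HK r.+1 (leq_trans Kr (leqnSn r)).
by rewrite big_ord_recr /= addrA -(HK r Kr) -{1}[s]addr0 => /addrI.
Qed.

Lemma nth_snd_bounded (T : Type) (s : seq (T * int)) :
  exists M : nat, forall d t, (t < size s)%N -> (absz (nth d s t).2 <= M)%N.
Proof.
elim: s => [|e s [M HM]]; first by exists 0%N.
exists (maxn (absz e.2) M) => d [_|t] /=; first exact: leq_maxl.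
by rewrite ltnS => /HM /leq_trans; apply; apply: leq_maxr.
Qed.

Lemma mono_cons (A : algType Kq) N (x : 'I_N -> int -> A) i n s :
  mono x ((i, n) :: s) = x i n * mono x s.
Proof. by rewrite /mono big_cons. Qed.

Section OmegaOperator.
Variables (A : algType Kq) (N : nat) (gh ghi : A) (x : 'I_N -> int -> A).
Variables (F : 'I_N -> int -> seq ('I_N * int) -> A) (O : 'I_N -> int -> A -> A).
Hypothesis O_spec : Omega_spec F gh ghi x O.

Lemma omegaD i l a b : O i l (a + b) = O i l a + O i l b.
Proof. by have [lin _ _ _ _] := O_spec; have := lin i l 1 a b; rewrite !scale1r. Qed.

Lemma omega0 i l : O i l 0 = 0.
Proof. by apply: (addrI (O i l 0)); rewrite -omegaD !addr0. Qed.

Lemma omegaZ i l c a : O i l (c *: a) = c *: O i l a.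
Proof. by have [lin _ _ _ _] := O_spec; have := lin i l c a 0; rewrite !addr0 omega0 addr0. Qed.

Lemma omega_sum i l (I : Type) (r : seq I) (f : I -> A) :
  O i l (\sum_(e <- r) f e) = \sum_(e <- r) O i l (f e).
Proof.
elim: r => [|e r IH]; first by rewrite !big_nil omega0.
by rewrite !big_cons omegaD IH.
Qed.

Lemma omega_gpow i l z a : O i l (gpow gh ghi z * a) = gpow gh ghi z * O i l a.
Proof.
have [_ O_gh O_ghi _ _] := O_spec.
case: z => n /=.
  elim: n => [|n IH]; first by rewrite !mul1r.
  by rewrite exprS -mulrA O_gh IH mulrA.
elim: n.+1 => [|k IH]; first by rewrite !mul1r.
by rewrite exprS -mulrA O_ghi IH mulrA.
Qed.

Lemma omega1 i l : O i l 1 = 0.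
Proof. by have [_ _ _ ? _] := O_spec. Qed.

Lemma omega_mono i l s : O i l (mono x s) = F i l s.
Proof. by have [_ _ _ _ ?] := O_spec. Qed.

End OmegaOperator.

Definition delta_term (A : algType Kq) (gh ghi : A) N (b : bool) (m i : 'I_N)
    (l n : int) (P : A) : A :=
  if (i == m) && (n == - l) then gpow gh ghi (gamma_exp b l) * P else 0.

Section Exchange.
Variables (A : algType Kq) (N : nat) (gh ghi : A) (x : 'I_N -> int -> A).
Hypotheses (gh_ghi : gh * ghi = 1) (ghi_gh : ghi * gh = 1).
Hypothesis gh_central : forall a : A, gh * a = a * gh.
Hypothesis Nq_span : forall a : A, exists r : seq (Kq * int * seq ('I_N * int)),
  a = \sum_(e <- r) e.1.1 *: (gpow gh ghi e.1.2 * mono x e.2).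

Let gpowC := gpow_central gh_ghi ghi_gh gh_central.

Lemma Nq_span_ind (Pr : A -> Prop) :
  Pr 0 -> (forall c a b, Pr a -> Pr b -> Pr (c *: a + b)) ->
  (forall z s, Pr (gpow gh ghi z * mono x s)) -> forall a, Pr a.
Proof.
move=> Pr0 PrD Pr_mono a; have [r ->] := Nq_span a.
by elim: r => [|e r IH]; rewrite ?big_nil ?big_cons //; apply: PrD.
Qed.

Lemma delta_termD b (m i : 'I_N) l n c P Q :
  delta_term gh ghi b m i l n (c *: P + Q)
  = c *: delta_term gh ghi b m i l n P + delta_term gh ghi b m i l n Q.
Proof.
by rewrite /delta_term; case: ifP => _; rewrite ?scaler0 ?addr0 // mulrDr scalerAr.
Qed.

Lemma delta_term0 b (m i : 'I_N) l n : delta_term gh ghi b m i l n 0 = 0.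
Proof. by rewrite /delta_term; case: ifP => _; rewrite ?mulr0. Qed.

Lemma delta_term_gpow b (m i : 'I_N) l n z P :
  delta_term gh ghi b m i l n (gpow gh ghi z * P)
  = gpow gh ghi z * delta_term gh ghi b m i l n P.
Proof. by rewrite /delta_term; case: ifP => _; rewrite ?mulr0 // !mulrA gpowC. Qed.

Lemma omega_delta_term F O (O_spec : Omega_spec F gh ghi x O) b j la (m i : 'I_N) l n P :
  O j la (delta_term gh ghi b m i l n P) = delta_term gh ghi b m i l n (O j la P).
Proof.
by rewrite /delta_term; case: ifP => _; [exact: (omega_gpow O_spec) | exact: (omega0 O_spec)].
Qed.

Variables (G : 'I_N -> 'I_N -> nat -> Kq) (b : bool) (O : 'I_N -> int -> A -> A).
Hypothesis G_sym : forall i j r, G i j r = G j i r.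
Hypothesis O_spec : Omega_spec (omega_on_mono G b gh ghi x) gh ghi x O.

Definition exchange_sum K m i l n P :=
  \sum_(r < K) G i m r *:
    (gpow gh ghi (2 * r%:Z) * (x i (xshift b n r) * O m (lshift b l r) P)).

Lemma exchange_sumD K m i l n c P Q :
  exchange_sum K m i l n (c *: P + Q)
  = c *: exchange_sum K m i l n P + exchange_sum K m i l n Q.
Proof.
rewrite /exchange_sum scaler_sumr -big_split; apply: eq_bigr => r _ /=.
rewrite (omegaD O_spec) (omegaZ O_spec) !mulrDr scalerDr; congr (_ + _).
by rewrite -!scalerAr !scalerA mulrC.
Qed.

Lemma exchange_sum0 K m i l n : exchange_sum K m i l n 0 = 0.
Proof. by rewrite /exchange_sum big1 // => r _; rewrite (omega0 O_spec) !mulr0 scaler0. Qed.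

Lemma exchange_sum_gpow K m i l n z P :
  exchange_sum K m i l n (gpow gh ghi z * P) = gpow gh ghi z * exchange_sum K m i l n P.
Proof.
rewrite /exchange_sum mulr_sumr; apply: eq_bigr => r _.
rewrite (omega_gpow O_spec) -scalerAr; congr (_ *: _).
by rewrite !mulrA -(gpowC z (gpow gh ghi (2 * r%:Z) * x i (xshift b n r))) !mulrA.
Qed.

Lemma omega_exchange m i l n P : eventually (fun K =>
  O m l (x i n * P) = delta_term gh ghi b m i l n P + exchange_sum K m i l n P).
Proof.
move: m i l n; elim/Nq_span_ind: P.
- move=> m i l n; exists 0%N => K _.
  by rewrite mulr0 (omega0 O_spec) delta_term0 exchange_sum0 addr0.
- move=> c a a' Ea Ea' m i l n.
  apply: eventually_impl (eventuallyI (Ea m i l n) (Ea' m i l n)) => K [EaK Ea'K].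
  rewrite mulrDr -scalerAr (omegaD O_spec) (omegaZ O_spec) EaK Ea'K.
  by rewrite delta_termD exchange_sumD scalerDr addrACA.
move=> z s m i l n.
have [M HM] := nth_snd_bounded s.
exists (absz l + M).+1 => K HK.
have HK' (t : 'I_(size s)) : (absz (l + (nth (m, 0%Z) s t).2)%R < K)%N.
  by have := HM (m, 0%Z) t (ltn_ord t); lia.
rewrite delta_term_gpow exchange_sum_gpow mulrA -gpowC -mulrA -mono_cons.
rewrite (omega_gpow O_spec) (omega_mono O_spec) -mulrDr; congr (_ * _).
rewrite -[LHS](subrK (delta_term gh ghi b m i l n (mono x s))).
rewrite (omega_on_mono_cons b x gh_ghi ghi_gh gh_central G_sym _ _ HK') addrC.
by congr (_ + _); apply: eq_bigr => r _; rewrite (omega_mono O_spec).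
Qed.

Lemma omega_lshift_vanish P l : eventually (fun K =>
  forall m r, (K <= r)%N -> O m (lshift b l r) P = 0).
Proof.
move: l; elim/Nq_span_ind: P.
- by move=> l; exists 0%N => K _ m r _; rewrite (omega0 O_spec).
- move=> c a a' Ea Ea' l.
  apply: eventually_impl (eventuallyI (Ea l) (Ea' l)) => K [E E'] m r Kr.
  by rewrite (omegaD O_spec) (omegaZ O_spec) E // E' // scaler0 addr0.
move=> z s l; have [M HM] := nth_snd_bounded s.
exists (absz l + M).+1 => K HK m r Kr.
rewrite (omega_gpow O_spec) (omega_mono O_spec) /omega_on_mono big1 ?mulr0 // => t _.
have := HM (m, 0%Z) t (ltn_ord t).
rewrite /oriented /lshift; case: b => H; rewrite ifN //; lia.
Qed.

End Exchange.

Section DoubleExchange.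
Variables (A : algType Kq) (N : nat) (gh ghi : A) (x : 'I_N -> int -> A).
Hypotheses (gh_ghi : gh * ghi = 1) (ghi_gh : ghi * gh = 1).
Hypothesis gh_central : forall a : A, gh * a = a * gh.
Hypothesis Nq_span : forall a : A, exists r : seq (Kq * int * seq ('I_N * int)),
  a = \sum_(e <- r) e.1.1 *: (gpow gh ghi e.1.2 * mono x e.2).
Variables (G1 G2 : 'I_N -> 'I_N -> nat -> Kq) (b1 b2 : bool).
Variables (O1 O2 : 'I_N -> int -> A -> A).
Hypotheses (G1_sym : forall i j r, G1 i j r = G1 j i r)
  (G2_sym : forall i j r, G2 i j r = G2 j i r).
Hypothesis O1_spec : Omega_spec (omega_on_mono G1 b1 gh ghi x) gh ghi x O1.
Hypothesis O2_spec : Omega_spec (omega_on_mono G2 b2 gh ghi x) gh ghi x O2.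

Definition double_sum K (i j k : 'I_N) (n : int) (f : nat -> nat -> A) : A :=
  \sum_(r < K) \sum_(s < K) (G2 i k r * G1 i j s) *:
     (gpow gh ghi (2 * r%:Z) * (gpow gh ghi (2 * s%:Z) *
        (x i (xshift b1 (xshift b2 n r) s) * f r s))).

(* Moving [x_i(v)] through [O2_k(u2)] and then through [O1_j(u1)]. *)
Lemma omega_omega_exchange j k i n l1 l2 P : eventually (fun K =>
  O1 j l1 (O2 k l2 (x i n * P)) =
    delta_term gh ghi b2 k i l2 n (O1 j l1 P)
    + \sum_(r < K) G2 i k r *: (gpow gh ghi (2 * r%:Z) *
          delta_term gh ghi b1 j i l1 (xshift b2 n r) (O2 k (lshift b2 l2 r) P))
    + double_sum K i j k n
        (fun r s => O1 j (lshift b1 l1 s) (O2 k (lshift b2 l2 r) P))).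
Proof.
have [R vanish] := omega_lshift_vanish Nq_span O2_spec P l2.
have exchange_outer r : (r < R)%N -> eventually (fun K =>
    O1 j l1 (x i (xshift b2 n r) * O2 k (lshift b2 l2 r) P) =
    delta_term gh ghi b1 j i l1 (xshift b2 n r) (O2 k (lshift b2 l2 r) P) +
    exchange_sum gh ghi x G1 b1 O1 K j i l1 (xshift b2 n r) (O2 k (lshift b2 l2 r) P)).
  by move=> _; apply: (omega_exchange gh_ghi ghi_gh gh_central Nq_span G1_sym O1_spec).
have := eventuallyI (eventuallyI
  (omega_exchange gh_ghi ghi_gh gh_central Nq_span G2_sym O2_spec k i l2 n P)
  (eventually_all_lt exchange_outer)) (eventually_ge R).
apply: eventually_impl => K [[-> exchange_inner] RK].
rewrite (omegaD O1_spec) (omega_delta_term O1_spec) -addrA; congr (_ + _).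
rewrite /exchange_sum (omega_sum O1_spec) /double_sum -big_split.
apply: eq_bigr => r _; rewrite (omegaZ O1_spec) (omega_gpow O1_spec).
have [rR|Rr] := ltnP r R; first rewrite exchange_inner //.
  rewrite mulrDr scalerDr; congr (_ + _).
  rewrite /exchange_sum mulr_sumr scaler_sumr; apply: eq_bigr => s _.
  by rewrite -scalerAr scalerA.
rewrite (vanish R (leqnn _) k r Rr) mulr0 (omega0 O1_spec) delta_term0 !mulr0.
rewrite big1 ?scaler0 ?Monoid.simpm // => s _; by rewrite (omega0 O1_spec) !mulr0 scaler0.
Qed.

End DoubleExchange.

Lemma xshiftC b1 b2 n r s : xshift b1 (xshift b2 n r) s = xshift b2 (xshift b1 n s) r.
Proof. by rewrite /xshift; case: b1; case: b2; lia. Qed.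

Lemma lshiftD1 b l s : lshift b (l + 1) s = lshift b l s + 1.
Proof. by rewrite /lshift; case: b; lia. Qed.

Lemma subr_add3 (V : zmodType) (a1 b1 c1 a2 b2 c2 : V) :
  (a1 + b1 + c1) - (a2 + b2 + c2) = (a1 - a2) + (b1 - b2) + (c1 - c2).
Proof. by rewrite !opprD addrACA [X in X + _]addrACA. Qed.

Section DeltaBalance.
Variables (A : algType Kq) (N : nat) (gh ghi : A).
Variables (G : 'I_N -> 'I_N -> nat -> Kq) (b1 b2 : bool) (j k : 'I_N) (al : Kq) (w : int).

(* The contributions of the delta part of [O2_k(u2)] (resp. of [O1_j(u1)]) to the
   two sides of [(al gamma^w u1 - u2) O1_j(u1) O2_k(u2) = ...] cancel; here [G] is
   the [g]-series of the other operator and [u] (resp. [v]) stands for the modes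
   of the other operator applied to a fixed element. *)
Definition inner_delta_balance : Prop :=
  forall (u : int -> A) (i : 'I_N) n l1 l2, eventually (fun K =>
    al *: (gpow gh ghi w * delta_term gh ghi b2 k i l2 n (u (l1 + 1)))
      - delta_term gh ghi b2 k i (l2 + 1) n (u l1)
    = gpow gh ghi w * (\sum_(s < K) G i j s *: (gpow gh ghi (2 * s%:Z) *
          delta_term gh ghi b2 k i l2 (xshift b1 n s) (u (lshift b1 (l1 + 1) s))))
      - al *: \sum_(s < K) G i j s *: (gpow gh ghi (2 * s%:Z) *
          delta_term gh ghi b2 k i (l2 + 1) (xshift b1 n s) (u (lshift b1 l1 s)))).

Definition outer_delta_balance : Prop :=
  forall (v : int -> A) (i : 'I_N) n l1 l2, eventually (fun K =>
    al *: (gpow gh ghi w * \sum_(r < K) G i k r *: (gpow gh ghi (2 * r%:Z) *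
          delta_term gh ghi b1 j i (l1 + 1) (xshift b2 n r) (v (lshift b2 l2 r))))
      - \sum_(r < K) G i k r *: (gpow gh ghi (2 * r%:Z) *
          delta_term gh ghi b1 j i l1 (xshift b2 n r) (v (lshift b2 (l2 + 1) r)))
    = gpow gh ghi w * delta_term gh ghi b1 j i (l1 + 1) n (v l2)
      - al *: delta_term gh ghi b1 j i l1 n (v (l2 + 1))).

End DeltaBalance.

Section Commutation.
Variables (A : algType Kq) (N : nat) (gh ghi : A) (x : 'I_N -> int -> A).
Hypotheses (gh_ghi : gh * ghi = 1) (ghi_gh : ghi * gh = 1).
Hypothesis gh_central : forall a : A, gh * a = a * gh.
Hypothesis Nq_span : forall a : A, exists r : seq (Kq * int * seq ('I_N * int)),
  a = \sum_(e <- r) e.1.1 *: (gpow gh ghi e.1.2 * mono x e.2).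
Variables (G1 G2 : 'I_N -> 'I_N -> nat -> Kq) (b1 b2 : bool).
Variables (O1 O2 : 'I_N -> int -> A -> A).
Hypotheses (G1_sym : forall i j r, G1 i j r = G1 j i r)
  (G2_sym : forall i j r, G2 i j r = G2 j i r).
Hypothesis O1_spec : Omega_spec (omega_on_mono G1 b1 gh ghi x) gh ghi x O1.
Hypothesis O2_spec : Omega_spec (omega_on_mono G2 b2 gh ghi x) gh ghi x O2.
Variables (j k : 'I_N) (al : Kq) (w : int).
Hypothesis inner_balance : inner_delta_balance gh ghi G1 b1 b2 j k al w.
Hypothesis outer_balance : outer_delta_balance gh ghi G2 b1 b2 j k al w.

Let gpowC := gpow_central gh_ghi ghi_gh gh_central.
Let double12 := double_sum gh ghi x G1 G2 b1 b2.

Definition comm_lhs P l1 l2 :=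
  al *: (gpow gh ghi w * O1 j (l1 + 1) (O2 k l2 P)) - O1 j l1 (O2 k (l2 + 1) P).
Definition comm_rhs P l1 l2 :=
  gpow gh ghi w * O2 k l2 (O1 j (l1 + 1) P) - al *: O2 k (l2 + 1) (O1 j l1 P).

Lemma double_sum_swap K i n f :
  double_sum gh ghi x G2 G1 b2 b1 K i k j n f = double12 K i j k n (fun r s => f s r).
Proof.
rewrite /double12 /double_sum exchange_big; apply: eq_bigr => r _; apply: eq_bigr => s _.
rewrite mulrC xshiftC; congr (_ *: _).
by rewrite !mulrA (gpowC (2 * s%:Z) (gpow gh ghi (2 * r%:Z))).
Qed.

Lemma double_sum_comb K i n f1 f2 f3 f4 :
  al *: (gpow gh ghi w * double12 K i j k n f1) - double12 K i j k n f2
    - (gpow gh ghi w * double12 K i j k n f3 - al *: double12 K i j k n f4)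
  = double12 K i j k n
      (fun r s => al *: (gpow gh ghi w * f1 r s) - f2 r s
                  - (gpow gh ghi w * f3 r s - al *: f4 r s)).
Proof.
rewrite /double12 /double_sum !mulr_sumr !scaler_sumr -!sumrB; apply: eq_bigr => r _.
rewrite !mulr_sumr !scaler_sumr -!sumrB; apply: eq_bigr => s _.
set c := G2 i k r * G1 i j s.
set X := x i (xshift b1 (xshift b2 n r) s).
have gw_inside (y : A) :
    gpow gh ghi w * (c *: (gpow gh ghi (2 * r%:Z) * (gpow gh ghi (2 * s%:Z) * (X * y))))
    = c *: (gpow gh ghi (2 * r%:Z) * (gpow gh ghi (2 * s%:Z) * (X * (gpow gh ghi w * y)))).
  by rewrite -scalerAr; congr (_ *: _); rewrite !mulrA -(gpowC w) !mulrA.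
rewrite !gw_inside !scalerA mulrC -!scalerA -!scalerBr; congr (_ *: _).
by congr (_ *: _); rewrite !mulrBr !scalerAr.
Qed.

Lemma comm_lhsD c a b l1 l2 :
  comm_lhs (c *: a + b) l1 l2 = c *: comm_lhs a l1 l2 + comm_lhs b l1 l2.
Proof.
rewrite /comm_lhs !(omegaD O2_spec) !(omegaZ O2_spec) !(omegaD O1_spec) !(omegaZ O1_spec).
rewrite mulrDr -scalerAr scalerDr (scalerA al c) mulrC -scalerA scalerBr.
by rewrite opprD addrACA.
Qed.

Lemma comm_rhsD c a b l1 l2 :
  comm_rhs (c *: a + b) l1 l2 = c *: comm_rhs a l1 l2 + comm_rhs b l1 l2.
Proof.
rewrite /comm_rhs !(omegaD O1_spec) !(omegaZ O1_spec) !(omegaD O2_spec) !(omegaZ O2_spec).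
rewrite mulrDr -scalerAr scalerDr (scalerA al c) mulrC -scalerA scalerBr.
by rewrite opprD addrACA.
Qed.

(* Induction on the length of the monomial: after moving its first factor through
   both operators, the delta parts cancel by the balance hypotheses and the rest
   is the induction hypothesis at shifted modes. *)
Lemma omega_comm_mono s : forall z l1 l2,
  comm_lhs (gpow gh ghi z * mono x s) l1 l2 = comm_rhs (gpow gh ghi z * mono x s) l1 l2.
Proof.
elim: s => [|[i n] s IH] z l1 l2.
  have kill F O (O_spec : Omega_spec F gh ghi x O) m l :
      O m l (gpow gh ghi z * mono x [::]) = 0.
    by rewrite /mono big_nil (omega_gpow O_spec) (omega1 O_spec) mulr0.
  rewrite /comm_lhs /comm_rhs !(kill _ _ O1_spec) !(kill _ _ O2_spec).
  by rewrite !(omega0 O1_spec) !(omega0 O2_spec) !mulr0 !scaler0 !subrr.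
set P := gpow gh ghi z * mono x s.
have -> : gpow gh ghi z * mono x ((i, n) :: s) = x i n * P.
  by rewrite mono_cons mulrA (gpowC z (x i n)) -mulrA.
have exch12 := omega_omega_exchange gh_ghi ghi_gh gh_central Nq_span G1_sym G2_sym O1_spec O2_spec.
have exch21 := omega_omega_exchange gh_ghi ghi_gh gh_central Nq_span G2_sym G1_sym O2_spec O1_spec.
have := eventuallyI
  (eventuallyI (eventuallyI (exch12 j k i n (l1 + 1) l2 P) (exch12 j k i n l1 (l2 + 1) P))
               (eventuallyI (exch21 k j i n l2 (l1 + 1) P) (exch21 k j i n (l2 + 1) l1 P)))
  (eventuallyI (inner_balance (fun l => O1 j l P) i n l1 l2)
               (outer_balance (fun l => O2 k l P) i n l1 l2)).
move=> [K /(_ K (leqnn K)) [[[E1 E2] [E3 E4]] [inner outer]]].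
rewrite /comm_lhs /comm_rhs E1 E2 E3 E4 !mulrDr !scalerDr !subr_add3 inner outer.
rewrite !double_sum_swap.
rewrite [X in X + _ = _]addrC; congr (_ + _).
apply/eqP; rewrite -subr_eq0; apply/eqP.
rewrite -!/(double12 _ _ _ _ _ _) double_sum_comb /double12 /double_sum.
rewrite big1 // => r _; rewrite big1 // => s' _.
have := IH z (lshift b1 l1 s') (lshift b2 l2 r); rewrite /comm_lhs /comm_rhs !lshiftD1 => ->.
by rewrite subrr !mulr0 scaler0.
Qed.

Lemma omega_comm P l1 l2 : comm_lhs P l1 l2 = comm_rhs P l1 l2.
Proof.
move: l1 l2; elim/(Nq_span_ind Nq_span): P.
- move=> l1 l2; rewrite /comm_lhs /comm_rhs ?(omega0 O2_spec) ?(omega0 O1_spec).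
  by rewrite ?(omega0 O2_spec) !mulr0 !scaler0 !subrr.
- by move=> c a b Ea Eb l1 l2; rewrite comm_lhsD comm_rhsD Ea Eb.
- by move=> z s; apply: omega_comm_mono.
Qed.

End Commutation.

Definition xshift_inv (b : bool) (n c : int) : int := if b then n - c else c - n.

Definition at_nonneg (V : zmodType) (d : int) (f : nat -> V) : V :=
  if 0 <= d then f (absz d) else 0.

Lemma sum_xshift_eq (V : zmodType) K b (n c : int) (f : nat -> V) :
  (absz (xshift_inv b n c) < K)%N ->
  \sum_(s < K) (if xshift b n s == c then f s else 0) = at_nonneg (xshift_inv b n c) f.
Proof.
rewrite /at_nonneg /xshift_inv /xshift; case: b => dK; case: ifP => d0.
all: try by rewrite big1 // => s _; rewrite ifN //; lia.
all: rewrite (bigD1 (Ordinal dK)) //= ifT; last by lia.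
all: by rewrite big1 ?addr0 // => s; rewrite -val_eqE /= => sd; rewrite ifN //; lia.
Qed.

Section DeltaBalanceLemmas.
Variables (A : algType Kq) (N : nat) (gh ghi : A).
Hypotheses (gh_ghi : gh * ghi = 1) (ghi_gh : ghi * gh = 1).
Hypothesis gh_central : forall a : A, gh * a = a * gh.

Let gpowD := gpowD gh_ghi ghi_gh gh_central.

Lemma scale_mul_if (c : Kq) (g : A) (C : bool) (y : A) :
  c *: (g * (if C then y else 0)) = if C then c *: (g * y) else 0.
Proof. by case: C; rewrite ?mulr0 ?scaler0. Qed.

Lemma delta_term_offdiag b (m i : 'I_N) l n P :
  i != m -> delta_term gh ghi b m i l n P = 0.
Proof. by rewrite /delta_term => /negbTE ->. Qed.

Lemma delta_term_diag b (m : 'I_N) l n P :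
  delta_term gh ghi b m m l n P = if n == - l then gpow gh ghi (gamma_exp b l) * P else 0.
Proof. by rewrite /delta_term eqxx. Qed.

(* Only the term [s] with [xshift b1 n s = - l2] survives each sum. *)
Lemma inner_delta_balance_at G b1 b2 (j k : 'I_N) al w :
  (forall (u : int -> A) n l1 l2,
    al *: (gpow gh ghi w * (if n == - l2 then gpow gh ghi (gamma_exp b2 l2) * u (l1 + 1) else 0))
      - (if n == - (l2 + 1) then gpow gh ghi (gamma_exp b2 (l2 + 1)) * u l1 else 0)
    = gpow gh ghi w * at_nonneg (xshift_inv b1 n (- l2)) (fun s => G k j s *:
          (gpow gh ghi (2 * s%:Z) * (gpow gh ghi (gamma_exp b2 l2) * u (lshift b1 (l1 + 1) s))))
      - al *: at_nonneg (xshift_inv b1 n (- (l2 + 1))) (fun s => G k j s *: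
          (gpow gh ghi (2 * s%:Z) * (gpow gh ghi (gamma_exp b2 (l2 + 1)) * u (lshift b1 l1 s))))) ->
  inner_delta_balance gh ghi G b1 b2 j k al w.
Proof.
move=> picked u i n l1 l2; exists (absz n + absz l2 + 3)%N => K HK.
case: (eqVneq i k) => [->|ik]; last first.
  rewrite !delta_term_offdiag // big1 => [|s _]; last by rewrite delta_term_offdiag // mulr0 scaler0.
  by rewrite big1 => [|s _]; rewrite ?delta_term_offdiag // ?mulr0 ?scaler0 ?subrr.
rewrite !delta_term_diag.
under eq_bigr => s _ do rewrite delta_term_diag scale_mul_if.
under [X in _ = _ - _ *: X]eq_bigr => s _ do rewrite delta_term_diag scale_mul_if.
rewrite picked; congr (_ * _ - _ *: _); symmetry.
all: by apply: sum_xshift_eq; rewrite /xshift_inv; clear picked; case: b1; lia.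
Qed.

Lemma outer_delta_balance_at G b1 b2 (j k : 'I_N) al w :
  (forall (v : int -> A) n l1 l2,
    al *: (gpow gh ghi w * at_nonneg (xshift_inv b2 n (- (l1 + 1))) (fun r => G j k r *:
          (gpow gh ghi (2 * r%:Z) * (gpow gh ghi (gamma_exp b1 (l1 + 1)) * v (lshift b2 l2 r)))))
      - at_nonneg (xshift_inv b2 n (- l1)) (fun r => G j k r *:
          (gpow gh ghi (2 * r%:Z) * (gpow gh ghi (gamma_exp b1 l1) * v (lshift b2 (l2 + 1) r))))
    = gpow gh ghi w * (if n == - (l1 + 1) then gpow gh ghi (gamma_exp b1 (l1 + 1)) * v l2 else 0)
      - al *: (if n == - l1 then gpow gh ghi (gamma_exp b1 l1) * v (l2 + 1) else 0)) ->
  outer_delta_balance gh ghi G b1 b2 j k al w.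
Proof.
move=> picked v i n l1 l2; exists (absz n + absz l1 + 3)%N => K HK.
case: (eqVneq i j) => [->|ij]; last first.
  rewrite !delta_term_offdiag // big1 => [|r _]; last by rewrite delta_term_offdiag // mulr0 scaler0.
  by rewrite big1 => [|r _]; rewrite ?delta_term_offdiag // ?mulr0 ?scaler0 ?subrr.
rewrite !delta_term_diag.
under eq_bigr => r _ do rewrite delta_term_diag scale_mul_if.
under [X in _ - X = _]eq_bigr => r _ do rewrite delta_term_diag scale_mul_if.
rewrite -picked; congr (_ *: (_ * _) - _).
all: by apply: sum_xshift_eq; rewrite /xshift_inv; clear picked; case: b2; lia.
Qed.

Lemma collect_gpow_term (u : int -> A) (E0 W0 : int) : exists Y : A,
  forall E W, E = E0 -> W = W0 -> gpow gh ghi E * u W = Y.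
Proof. by exists (gpow gh ghi E0 * u W0) => E W -> ->. Qed.

(* Identifies the terms [gamma^E u(W)] whose exponents agree up to [lia]. *)
Ltac collect_term u E0 W0 :=
  let Y := fresh "Y" in
  let EY := fresh "EY" in
  have [Y EY] := collect_gpow_term u E0 W0;
  rewrite ?EY; try lia.

Ltac decide_ifs := repeat match goal with
  |- context [if ?C then _ else _] =>
     first [ rewrite (_ : C = true); last by lia
           | rewrite (_ : C = false); last by lia ] end.

(* From [(t - Q) g_Q(t) = Q t - 1]: the Taylor coefficients of [g_Q] satisfy these
   recurrences for [Q = al^-1] (Omega_psi) and [Q = al] (Omega_phi). *)
Definition psi_recurrence (c : nat -> Kq) (al : Kq) :=
  [/\ c 0%N = al, c 1%N - al * c 0%N = -1 & forall d, c d.+2 = al * c d.+1].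
Definition phi_recurrence (e : nat -> Kq) (al : Kq) :=
  [/\ al * e 0%N = 1, e 0%N - al * e 1%N = al & forall d, e d.+1 = al * e d.+2].

Lemma inner_balance_psi_psi (G : 'I_N -> 'I_N -> nat -> Kq) (j k : 'I_N) al :
  psi_recurrence (G k j) al -> inner_delta_balance gh ghi G false false j k al 0.
Proof.
move=> [f0 f1 f2]; apply: inner_delta_balance_at => u n l1 l2.
rewrite /at_nonneg gpow0 !mul1r /gamma_exp /lshift /xshift_inv.
have [d En] : exists d, n = - l2 - d by exists (- l2 - n); lia.
case: d En => [[|[|m]]|m] En; decide_ifs.
- rewrite (_ : absz (- l2 - n) = 0%N); last by lia.
  rewrite !mulrA -!gpowD.
  collect_term u (2 * l2) (l1 + 1).
  by rewrite f0 subr0 scaler0 subr0.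
- rewrite (_ : absz (- l2 - n) = 1%N); last by lia.
  rewrite (_ : absz (- (l2 + 1) - n) = 0%N); last by lia.
  rewrite !mulrA -!gpowD.
  collect_term u (2 * l2 + 2) l1.
  by rewrite scaler0 sub0r scalerA -scalerBl f1 scaleN1r.
- rewrite (_ : absz (- l2 - n) = m.+2); last by lia.
  rewrite (_ : absz (- (l2 + 1) - n) = m.+1); last by lia.
  rewrite !mulrA -!gpowD.
  collect_term u (2 * l2 + 2 * m.+2%:Z) (l1 - m.+1%:Z).
  by rewrite scaler0 subrr scalerA -scalerBl f2 subrr scale0r.
- by rewrite ?mulr0 ?scaler0 ?subrr.
Qed.

Lemma inner_balance_phi_phi (G : 'I_N -> 'I_N -> nat -> Kq) (j k : 'I_N) al :
  phi_recurrence (G k j) al -> inner_delta_balance gh ghi G true true j k al 0.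
Proof.
move=> [f0 f1 f2]; apply: inner_delta_balance_at => u n l1 l2.
rewrite /at_nonneg gpow0 !mul1r /gamma_exp /lshift /xshift_inv.
have [d En] : exists d, n = d - l2 by exists (n + l2); lia.
case: d En => [[|m]|[|m]] En; decide_ifs.
- rewrite (_ : absz (n - - l2) = 0%N); last by lia.
  rewrite (_ : absz (n - - (l2 + 1)) = 1%N); last by lia.
  rewrite -?scalerAr !mulrA -!gpowD.
  collect_term u (- 2 * l2) (l1 + 1).
  by rewrite subr0 scalerA -scalerBl f1.
- rewrite (_ : absz (n - - l2) = m.+1); last by lia.
  rewrite (_ : absz (n - - (l2 + 1)) = m.+2); last by lia.
  rewrite -?scalerAr !mulrA -!gpowD.
  collect_term u (2 * m.+1%:Z - 2 * l2) (l1 + 1 + m.+1%:Z).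
  by rewrite scaler0 subrr scalerA -f2 subrr.
- rewrite (_ : absz (n - - (l2 + 1)) = 0%N); last by lia.
  rewrite -?scalerAr !mulrA -!gpowD.
  collect_term u (- 2 * l2 - 2) l1.
  by rewrite scaler0 !sub0r scalerA f0 scale1r.
- by rewrite ?mulr0 ?scaler0 ?subrr.
Qed.

Lemma inner_balance_phi_psi (G : 'I_N -> 'I_N -> nat -> Kq) (j k : 'I_N) al :
  phi_recurrence (G k j) al -> inner_delta_balance gh ghi G true false j k al 4.
Proof.
move=> [f0 f1 f2]; apply: inner_delta_balance_at => u n l1 l2.
rewrite /at_nonneg /gamma_exp /lshift /xshift_inv.
have [d En] : exists d, n = d - l2 by exists (n + l2); lia.
case: d En => [[|m]|[|m]] En; decide_ifs.
- rewrite (_ : absz (n - - l2) = 0%N); last by lia.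
  rewrite (_ : absz (n - - (l2 + 1)) = 1%N); last by lia.
  rewrite -?scalerAr !mulrA -!gpowD.
  collect_term u (2 * l2 + 4) (l1 + 1).
  by rewrite subr0 scalerA -scalerBl f1.
- rewrite (_ : absz (n - - l2) = m.+1); last by lia.
  rewrite (_ : absz (n - - (l2 + 1)) = m.+2); last by lia.
  rewrite -?scalerAr !mulrA -!gpowD.
  collect_term u (2 * m.+1%:Z + 2 * l2 + 4) (l1 + 1 + m.+1%:Z).
  by rewrite !mulr0 scaler0 subrr scalerA -f2 subrr.
- rewrite (_ : absz (n - - (l2 + 1)) = 0%N); last by lia.
  rewrite -?scalerAr !mulrA -!gpowD.
  collect_term u (2 * l2 + 2) l1.
  by rewrite !mulr0 scaler0 !sub0r scalerA f0 scale1r.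
- by rewrite ?mulr0 ?scaler0 ?subrr.
Qed.

Lemma outer_balance_psi_psi (G : 'I_N -> 'I_N -> nat -> Kq) (j k : 'I_N) al :
  psi_recurrence (G j k) al -> outer_delta_balance gh ghi G false false j k al 0.
Proof.
move=> [f0 f1 f2]; apply: outer_delta_balance_at => v n l1 l2.
rewrite /at_nonneg gpow0 !mul1r /gamma_exp /lshift /xshift_inv.
have [d En] : exists d, n = - l1 - d by exists (- l1 - n); lia.
case: d En => [[|[|m]]|m] En; decide_ifs.
- rewrite (_ : absz (- l1 - n) = 0%N); last by lia.
  rewrite -?scalerAr !mulrA -!gpowD.
  collect_term v (2 * l1) (l2 + 1).
  by rewrite scaler0 !sub0r f0.
- rewrite (_ : absz (- l1 - n) = 1%N); last by lia.
  rewrite (_ : absz (- (l1 + 1) - n) = 0%N); last by lia.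
  rewrite -?scalerAr !mulrA -!gpowD.
  collect_term v (2 * l1 + 2) l2.
  rewrite scaler0 subr0 scalerA -scalerBl.
  have -> : al * G j k 0%N - G j k 1%N = 1 by rewrite -opprB f1 opprK.
  by rewrite scale1r.
- rewrite (_ : absz (- l1 - n) = m.+2); last by lia.
  rewrite (_ : absz (- (l1 + 1) - n) = m.+1); last by lia.
  rewrite -?scalerAr !mulrA -!gpowD.
  collect_term v (2 * m.+2%:Z + 2 * l1) (l2 - m.+1%:Z).
  by rewrite scaler0 subrr scalerA -f2 subrr.
- by rewrite ?mulr0 ?scaler0 ?subrr.
Qed.

Lemma outer_balance_phi_phi (G : 'I_N -> 'I_N -> nat -> Kq) (j k : 'I_N) al :
  phi_recurrence (G j k) al -> outer_delta_balance gh ghi G true true j k al 0.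
Proof.
move=> [f0 f1 f2]; apply: outer_delta_balance_at => v n l1 l2.
rewrite /at_nonneg gpow0 !mul1r /gamma_exp /lshift /xshift_inv.
have [d En] : exists d, n = d - l1 by exists (n + l1); lia.
case: d En => [[|m]|[|m]] En; decide_ifs.
- rewrite (_ : absz (n - - l1) = 0%N); last by lia.
  rewrite (_ : absz (n - - (l1 + 1)) = 1%N); last by lia.
  rewrite -?scalerAr !mulrA -!gpowD.
  collect_term v (- 2 * l1) (l2 + 1).
  rewrite scalerA -scalerBl sub0r -scaleNr.
  by have -> : al * G j k 1%N - G j k 0%N = - al by rewrite -opprB f1.
- rewrite (_ : absz (n - - l1) = m.+1); last by lia.
  rewrite (_ : absz (n - - (l1 + 1)) = m.+2); last by lia.
  rewrite -?scalerAr !mulrA -!gpowD.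
  collect_term v (2 * m.+1%:Z - 2 * l1) (l2 + 1 + m.+1%:Z).
  by rewrite scaler0 subrr scalerA -f2 subrr.
- rewrite (_ : absz (n - - (l1 + 1)) = 0%N); last by lia.
  rewrite -?scalerAr !mulrA -!gpowD.
  collect_term v (- 2 * l1 - 2) l2.
  by rewrite scaler0 !subr0 scalerA f0 scale1r.
- by rewrite ?mulr0 ?scaler0 ?subrr.
Qed.

Lemma outer_balance_phi_psi (G : 'I_N -> 'I_N -> nat -> Kq) (j k : 'I_N) al :
  psi_recurrence (G j k) al -> outer_delta_balance gh ghi G true false j k al 4.
Proof.
move=> [f0 f1 f2]; apply: outer_delta_balance_at => v n l1 l2.
rewrite /at_nonneg /gamma_exp /lshift /xshift_inv.
have [d En] : exists d, n = - l1 - d by exists (- l1 - n); lia.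
case: d En => [[|[|m]]|m] En; decide_ifs.
- rewrite (_ : absz (- l1 - n) = 0%N); last by lia.
  rewrite -?scalerAr !mulrA -!gpowD.
  collect_term v (- 2 * l1) (l2 + 1).
  by rewrite !mulr0 scaler0 !sub0r f0.
- rewrite (_ : absz (- l1 - n) = 1%N); last by lia.
  rewrite (_ : absz (- (l1 + 1) - n) = 0%N); last by lia.
  rewrite -?scalerAr !mulrA -!gpowD.
  collect_term v (2 - 2 * l1) l2.
  rewrite scaler0 subr0 scalerA -scalerBl.
  have -> : al * G j k 0%N - G j k 1%N = 1 by rewrite -opprB f1 opprK.
  by rewrite scale1r.
- rewrite (_ : absz (- l1 - n) = m.+2); last by lia.
  rewrite (_ : absz (- (l1 + 1) - n) = m.+1); last by lia.
  rewrite -?scalerAr !mulrA -!gpowD.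
  collect_term v (2 * m.+2%:Z - 2 * l1) (l2 - m.+1%:Z).
  by rewrite !mulr0 scaler0 subrr scalerA -f2 subrr.
- by rewrite ?mulr0 ?scaler0 ?subrr.
Qed.

End DeltaBalanceLemmas.

Lemma gcoefV_psi_recurrence (a : Kq) : psi_recurrence (gcoef a^-1) a.
Proof.
rewrite /gcoef; split.
- by rewrite invrK.
- by rewrite !exprVn !invrK expr0 expr2 addrAC subrr sub0r.
- by move=> d; rewrite !exprVn !invrK mulrBr -!exprS.
Qed.

Lemma gcoef_phi_recurrence (a : Kq) : a != 0 -> phi_recurrence (gcoef a) a.
Proof.
move=> a0; have mulr_expV k : a * a ^- k.+1 = a ^- k.
  by rewrite exprS invfM mulrA mulfV // mul1r.
rewrite /gcoef; split.
- by rewrite mulfV.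
- by rewrite expr0 invr1 mulrBr mulr1 opprB addrA mulr_expV expr1 addrAC subrr add0r.
- by move=> d; rewrite mulrBr !mulr_expV.
Qed.

Lemma qq_expz_neq0 (z : int) : qq ^ z != 0.
Proof. by rewrite expfz_neq0 // /qq /qhalf expf_neq0 // tofrac_eq0 polyX_eq0. Qed.

Section RootData.
Variables (N : nat) (B : 'I_N -> 'I_N -> int).
Hypothesis B_sym : forall i j, B i j = B j i.

Lemma g_ij_qinv_sym i j r : g_ij_qinv B i j r = g_ij_qinv B j i r.
Proof. by rewrite /g_ij_qinv B_sym. Qed.

Lemma g_ij_sym i j r : g_ij B i j r = g_ij B j i r.
Proof. by rewrite /g_ij B_sym. Qed.

Lemma g_ij_qinv_psi_recurrence j k :
  psi_recurrence (g_ij_qinv B j k) (qq ^ B j k)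
  /\ psi_recurrence (g_ij_qinv B k j) (qq ^ B j k).
Proof. by rewrite /g_ij_qinv [B k j]B_sym -expfV; split; apply: gcoefV_psi_recurrence. Qed.

Lemma g_ij_phi_recurrence j k :
  phi_recurrence (g_ij B j k) (qq ^ B j k) /\ phi_recurrence (g_ij B k j) (qq ^ B j k).
Proof. by rewrite /g_ij [B k j]B_sym; split; apply/gcoef_phi_recurrence/qq_expz_neq0. Qed.

End RootData.

Theorem mainTheorem3 (N : nat) (B : 'I_N -> 'I_N -> int) (A : algType Kq)
    (gh ghi : A) (x : 'I_N -> int -> A) (Opsi Ophi : 'I_N -> int -> A -> A) :
  fin_simple_form B ->
  Nq_minus B gh ghi x ->
  Omega_spec (psi_mono B gh ghi x) gh ghi x Opsi ->
  Omega_spec (phi_mono B gh ghi x) gh ghi x Ophi ->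
  [/\ (forall (m i : 'I_N) (l n : int) (P : A),
         fin_sum_to
           (fun r : nat => g_ij_qinv B i m r *:
              (gpow gh ghi (2 * r%:Z) * (x i (n + r%:Z) * Opsi m (l - r%:Z) P)))
           (Opsi m l (x i n * P)
            - (if (i == m) && (n == - l) then gpow gh ghi (2 * l) * P else 0))),
      (forall (m i : 'I_N) (l n : int) (P : A),
         fin_sum_to
           (fun r : nat => g_ij B i m r *:
              (gpow gh ghi (2 * r%:Z) * (x i (n - r%:Z) * Ophi m (l + r%:Z) P)))
           (Ophi m l (x i n * P)
            - (if (i == m) && (n == - l) then gpow gh ghi (- (2 * l)) * P else 0))),
      (forall (j k : 'I_N) (l1 l2 : int) (P : A),
         qq ^ B j k *: Opsi j (l1 + 1) (Opsi k l2 P) - Opsi j l1 (Opsi k (l2 + 1) P)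
         = Opsi k l2 (Opsi j (l1 + 1) P) - qq ^ B j k *: Opsi k (l2 + 1) (Opsi j l1 P)),
      (forall (j k : 'I_N) (l1 l2 : int) (P : A),
         qq ^ B j k *: Ophi j (l1 + 1) (Ophi k l2 P) - Ophi j l1 (Ophi k (l2 + 1) P)
         = Ophi k l2 (Ophi j (l1 + 1) P) - qq ^ B j k *: Ophi k (l2 + 1) (Ophi j l1 P)) &
      (forall (j k : 'I_N) (l1 l2 : int) (P : A),
         qq ^ B j k *: (gpow gh ghi 4 * Ophi j (l1 + 1) (Opsi k l2 P))
           - Ophi j l1 (Opsi k (l2 + 1) P)
         = gpow gh ghi 4 * Opsi k l2 (Ophi j (l1 + 1) P)
           - qq ^ B j k *: Opsi k (l2 + 1) (Ophi j l1 P))].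
Proof.
move=> [_ B_sym _ _ _] [gh_ghi ghi_gh gh_central _ Nq_span].
rewrite psi_mono_omega phi_mono_omega => Opsi_spec Ophi_spec.
have gq_sym := g_ij_qinv_sym B_sym; have g_sym := g_ij_sym B_sym.
have psi_rec := g_ij_qinv_psi_recurrence B_sym; have phi_rec := g_ij_phi_recurrence B_sym.
have exchange := omega_exchange gh_ghi ghi_gh gh_central Nq_span.
have comm := omega_comm gh_ghi ghi_gh gh_central Nq_span.
split=> [m i l n P|m i l n P|j k l1 l2 P|j k l1 l2 P|j k l1 l2 P].
- exact/fin_sum_to_eventually/(exchange _ _ _ gq_sym Opsi_spec).
- exact/fin_sum_to_eventually/(exchange _ _ _ g_sym Ophi_spec).
- have := comm _ _ _ _ _ _ gq_sym gq_sym Opsi_spec Opsi_spec j k _ _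
    (inner_balance_psi_psi gh_ghi ghi_gh gh_central (psi_rec j k).2)
    (outer_balance_psi_psi gh_ghi ghi_gh gh_central (psi_rec j k).1) P l1 l2.
  by rewrite /comm_lhs /comm_rhs gpow0 !mul1r.
- have := comm _ _ _ _ _ _ g_sym g_sym Ophi_spec Ophi_spec j k _ _
    (inner_balance_phi_phi gh_ghi ghi_gh gh_central (phi_rec j k).2)
    (outer_balance_phi_phi gh_ghi ghi_gh gh_central (phi_rec j k).1) P l1 l2.
  by rewrite /comm_lhs /comm_rhs gpow0 !mul1r.
- exact: comm _ _ _ _ _ _ g_sym gq_sym Ophi_spec Opsi_spec j k _ _
    (inner_balance_phi_psi gh_ghi ghi_gh gh_central (phi_rec j k).2)
    (outer_balance_phi_psi gh_ghi ghi_gh gh_central (psi_rec j k).1) P l1 l2.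
Qed.
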